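(* Let $\mathcal{B}\models I\Sigma_1$. The set $M^{good}_B(\mathcal{B})$ of $B\times B$-matrices over $B$ that are good in $\mathcal{B}$ is closed under matrix multiplication (where the product $P=MN$ is given by $P_{ij}=\sum_{k} M_{ik}N_{kj}$, the sum computed in $\mathcal{B}$).
   Context: $I\Sigma_1$ is Robinson arithmetic with $\Sigma_1$-induction, in which Gödel coding of finite sets is available; a set $X\subseteq B^n$ is coded in $\mathcal{B}$ if some element of $B$ is, in $\mathcal{B}$, a set whose members are exactly those of $X$. A matrix $M=(M_{ij})_{i,j\in B}$ with entries in $B$ is good in $\mathcal{B}$ if for every $J\in B$ there is $I\in B$ such that (i) all non-zero entries $M_{ij}$ with $j<J$ have $i<I$, and (ii) the restricted matrix $(M_{ij})_{i<I,j<J}$ is coded in $\mathcal{B}$ (equivalently, for every $J$ the set $\{(i,j,M_{ij}): j<J, M_{ij}\neq0\}$ is coded in $\mathcal{B}$). *)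

Inductive term : Type :=
| tVar : nat -> term              (* de Bruijn index *)
| tZero : term
| tSucc : term -> term
| tPlus : term -> term -> term
| tTimes : term -> term -> term.

Inductive formula : Type :=
| fEq : term -> term -> formula
| fNot : formula -> formula
| fAnd : formula -> formula -> formula
| fOr : formula -> formula -> formula
| fImp : formula -> formula -> formula
| fAll : formula -> formula
| fEx : formula -> formula
| fBAll : term -> formula -> formula   (* forall x < t, phi   (t in outer context) *)
| fBEx : term -> formula -> formula.

Fixpoint is_delta0 (f : formula) : bool :=
  match f with
  | fEq _ _ => true
  | fNot g => is_delta0 g
  | fAnd g h | fOr g h | fImp g h => is_delta0 g && is_delta0 h
  | fAll _ | fEx _ => false
  | fBAll _ g | fBEx _ g => is_delta0 g
  end.

Fixpoint is_sigma1 (f : formula) : bool :=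
  match f with
  | fEx g => is_sigma1 g
  | _ => is_delta0 f
  end.

Record arith_structure : Type := {
  carrier :> Type;
  zeroA : carrier;
  succA : carrier -> carrier;
  addA : carrier -> carrier -> carrier;
  mulA : carrier -> carrier -> carrier }.

Section Semantics.
Variable B : arith_structure.

Definition ltA (x y : B) : Prop := exists z, addA B x (succA B z) = y.

Definition scons (b : B) (rho : nat -> B) : nat -> B :=
  fun n => match n with 0 => b | S m => rho m end.

Fixpoint evalt (rho : nat -> B) (t : term) : B :=
  match t with
  | tVar n => rho n
  | tZero => zeroA B
  | tSucc u => succA B (evalt rho u)
  | tPlus u v => addA B (evalt rho u) (evalt rho v)
  | tTimes u v => mulA B (evalt rho u) (evalt rho v)
  end.

Fixpoint sat (rho : nat -> B) (f : formula) : Prop :=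
  match f with
  | fEq u v => evalt rho u = evalt rho v
  | fNot g => ~ sat rho g
  | fAnd g h => sat rho g /\ sat rho h
  | fOr g h => sat rho g \/ sat rho h
  | fImp g h => sat rho g -> sat rho h
  | fAll g => forall b, sat (scons b rho) g
  | fEx g => exists b, sat (scons b rho) g
  | fBAll t g => forall b, ltA b (evalt rho t) -> sat (scons b rho) g
  | fBEx t g => exists b, ltA b (evalt rho t) /\ sat (scons b rho) g
  end.

Definition models_Q : Prop :=
  (forall x, succA B x <> zeroA B) /\
  (forall x y, succA B x = succA B y -> x = y) /\
  (forall x, x <> zeroA B -> exists y, x = succA B y) /\
  (forall x, addA B x (zeroA B) = x) /\
  (forall x y, addA B x (succA B y) = succA B (addA B x y)) /\
  (forall x, mulA B x (zeroA B) = zeroA B) /\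
  (forall x y, mulA B x (succA B y) = addA B (mulA B x y) x).

(* Induction for Sigma_1 formulas with parameters (variable 0 is the induction variable) *)
Definition sigma1_induction : Prop :=
  forall phi, is_sigma1 phi = true ->
  forall rho : nat -> B,
    sat (scons (zeroA B) rho) phi ->
    (forall b, sat (scons b rho) phi -> sat (scons (succA B b) rho) phi) ->
    forall b, sat (scons b rho) phi.

Definition models_ISigma1 : Prop := models_Q /\ sigma1_induction.

(* Cantor pairing:  z = <i,j>  iff  2z = (i+j)(i+j+1) + 2i *)
Definition pairA (i j z : B) : Prop :=
  addA B z z = addA B (mulA B (addA B i j) (succA B (addA B i j))) (addA B i i).

Definition modA (c m r : B) : Prop :=
  exists q, c = addA B (mulA B q m) r /\ ltA r m.

Definition betaA (c d k v : B) : Prop :=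
  modA c (succA B (mulA B (succA B k) d)) v.

(* x is a member of the finite set coded by s:  s = <n,<c,d>> and
   x = beta(c,d,k) for some k < n *)
Definition memA (x s : B) : Prop :=
  exists n c d p, pairA c d p /\ pairA n p s /\
    exists k, ltA k n /\ betaA c d k x.

Definition tripleA (i j v t : B) : Prop :=
  exists p, pairA j v p /\ pairA i p t.

Definition coded3 (X : B -> B -> B -> Prop) : Prop :=
  exists s, forall t, memA t s <-> exists i j v, tripleA i j v t /\ X i j v.

Definition good (M : B -> B -> B) : Prop :=
  forall J, exists I,
    (forall i j, ltA j J -> M i j <> zeroA B -> ltA i I) /\
    coded3 (fun i j v => ltA i I /\ ltA j J /\ v = M i j).

(* v is the entry P_ij = sum_k M_ik N_kj of the product, computed in B:
   all terms with k >= K vanish and v is the K-th partial sum, the sequence of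
   partial sums being (beta-)coded in B. *)
Definition prod_entry (M N : B -> B -> B) (i j v : B) : Prop :=
  exists K,
    (forall k, ~ ltA k K -> mulA B (M i k) (N k j) = zeroA B) /\
    exists c d,
      betaA c d (zeroA B) (zeroA B) /\
      (forall k a, ltA k K -> betaA c d k a ->
         betaA c d (succA B k) (addA B a (mulA B (M i k) (N k j)))) /\
      betaA c d K v.

End Semantics.

From Stdlib Require Import Setoid Ring Classical ClassicalEpsilon.

(* Fix a column bound J.  Goodness of N gives K with N_kj = 0 for j < J and k >= K, together with
   a code of N on K x J; goodness of M then gives I with M_ik = 0 for k < K and i >= I, together
   with a code of M on I x K.  So P_ij = 0 for i >= I and j < J, and for i < I the entry P_ij is
   the K-th partial sum of the terms M_ik N_kj, whose value does not depend on the cut-off K since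
   the later terms vanish.  The partial sums exist because, by Σ1-induction, every Δ0-recursive
   sequence with bounded values has a Gödel β-code: the moduli 1 + (k+1) d are pairwise coprime
   when d is divisible by all numbers up to the length, and codes are extended by Chinese
   remaindering.  Δ0-collection bounds the codes of all partial-sum sequences of the block I x J
   at once, and a final β-coding along k = i J + j produces a code of P on I x J. *)

Section ISigma1.
Variable B : arith_structure.
Hypothesis HQ : models_Q B.
Hypothesis HI : sigma1_induction B.

Local Notation o := (zeroA B).
Local Notation sc := (succA B).
Local Notation "x +' y" := (addA B x y) (at level 50, left associativity).
Local Notation "x *' y" := (mulA B x y) (at level 40, left associativity).
Local Notation "x <' y" := (ltA B x y) (at level 70).

(** * Arithmetic in a model of IΣ1 *)

Lemma succ_neq_zero x : sc x <> o. Proof. apply HQ. Qed.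
Lemma succ_inj x y : sc x = sc y -> x = y. Proof. apply HQ. Qed.
Lemma add_zero_r x : x +' o = x. Proof. apply HQ. Qed.
Lemma add_succ_r x y : x +' sc y = sc (x +' y). Proof. apply HQ. Qed.
Lemma mul_zero_r x : x *' o = o. Proof. apply HQ. Qed.
Lemma mul_succ_r x y : x *' sc y = x *' y +' x. Proof. apply HQ. Qed.

Lemma zero_or_succ x : x = o \/ exists y, x = sc y.
Proof. destruct (classic (x = o)); [left | right; apply HQ]; auto. Qed.

Definition env0 : nat -> B := fun _ => o.

Lemma sigma1_ind (phi : formula) (rho : nat -> B) (P : B -> Prop) :
  is_sigma1 phi = true -> (forall b, sat B (scons B b rho) phi <-> P b) ->
  P o -> (forall b, P b -> P (sc b)) -> forall b, P b.
Proof.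
  intros Hs Hiff H0 HS b. apply Hiff, HI; auto.
  - apply Hiff; auto.
  - intros c Hc. apply Hiff, HS, Hiff, Hc.
Qed.

Ltac ind phi rho :=
  match goal with |- forall b, @?P b =>
    apply (sigma1_ind phi rho P); [reflexivity | intro; simpl; try reflexivity | | ] end.

Lemma add_zero_l : forall x, o +' x = x.
Proof.
  ind (fEq (tPlus tZero (tVar 0)) (tVar 0)) env0.
  - apply add_zero_r.
  - intros b H. rewrite add_succ_r, H. auto.
Qed.

Lemma add_succ_l : forall x y, sc x +' y = sc (x +' y).
Proof.
  intros x.
  ind (fEq (tPlus (tSucc (tVar 1)) (tVar 0)) (tSucc (tPlus (tVar 1) (tVar 0)))) (scons B x env0).
  - rewrite !add_zero_r; auto.
  - intros b H. rewrite !add_succ_r, H. auto.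
Qed.

Lemma add_comm : forall x y, x +' y = y +' x.
Proof.
  intros x. ind (fEq (tPlus (tVar 1) (tVar 0)) (tPlus (tVar 0) (tVar 1))) (scons B x env0).
  - rewrite add_zero_r, add_zero_l; auto.
  - intros b H. rewrite add_succ_r, add_succ_l, H. auto.
Qed.

Lemma add_assoc : forall x y z, x +' y +' z = x +' (y +' z).
Proof.
  intros x y.
  ind (fEq (tPlus (tPlus (tVar 1) (tVar 2)) (tVar 0)) (tPlus (tVar 1) (tPlus (tVar 2) (tVar 0))))
      (scons B x (scons B y env0)).
  - rewrite !add_zero_r; auto.
  - intros b H. rewrite !add_succ_r, H. auto.
Qed.

Lemma mul_zero_l : forall x, o *' x = o.
Proof.
  ind (fEq (tTimes tZero (tVar 0)) tZero) env0.
  - apply mul_zero_r.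
  - intros b H. rewrite mul_succ_r, H, add_zero_r. auto.
Qed.

Lemma mul_succ_l : forall x y, sc x *' y = x *' y +' y.
Proof.
  intros x.
  ind (fEq (tTimes (tSucc (tVar 1)) (tVar 0)) (tPlus (tTimes (tVar 1) (tVar 0)) (tVar 0)))
      (scons B x env0).
  - rewrite !mul_zero_r, add_zero_r; auto.
  - intros b H. rewrite !mul_succ_r, H, !add_succ_r, !add_assoc, (add_comm x b). auto.
Qed.

Lemma mul_comm : forall x y, x *' y = y *' x.
Proof.
  intros x. ind (fEq (tTimes (tVar 1) (tVar 0)) (tTimes (tVar 0) (tVar 1))) (scons B x env0).
  - rewrite mul_zero_r, mul_zero_l; auto.
  - intros b H. rewrite mul_succ_r, mul_succ_l, H. auto.
Qed.

Lemma mul_add_distr_l : forall x y z, x *' (y +' z) = x *' y +' x *' z.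
Proof.
  intros x y.
  ind (fEq (tTimes (tVar 1) (tPlus (tVar 2) (tVar 0)))
           (tPlus (tTimes (tVar 1) (tVar 2)) (tTimes (tVar 1) (tVar 0))))
      (scons B x (scons B y env0)).
  - rewrite add_zero_r, mul_zero_r, add_zero_r; auto.
  - intros b H. rewrite add_succ_r, !mul_succ_r, H, add_assoc. auto.
Qed.

Lemma mul_assoc : forall x y z, x *' y *' z = x *' (y *' z).
Proof.
  intros x y.
  ind (fEq (tTimes (tTimes (tVar 1) (tVar 2)) (tVar 0)) (tTimes (tVar 1) (tTimes (tVar 2) (tVar 0))))
      (scons B x (scons B y env0)).
  - rewrite !mul_zero_r; auto.
  - intros b H. rewrite !mul_succ_r, H, mul_add_distr_l. auto.
Qed.

Lemma model_semi_ring : semi_ring_theory o (sc o) (addA B) (mulA B) eq.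
Proof.
  constructor.
  - apply add_zero_l.
  - apply add_comm.
  - intros; symmetry; apply add_assoc.
  - intros. rewrite mul_succ_l, mul_zero_l, add_zero_l. auto.
  - apply mul_zero_l.
  - apply mul_comm.
  - intros; symmetry; apply mul_assoc.
  - intros x y z. rewrite (mul_comm (_ +' _)), mul_add_distr_l, !(mul_comm z). auto.
Qed.

Add Ring model_ring : model_semi_ring.

Lemma succ_add_one x : sc x = x +' sc o.
Proof. rewrite add_succ_r, add_zero_r. auto. Qed.

(* [ring] only knows [sc o] as the constant one, so other successors are unfolded first. *)
Ltac sring :=
  repeat match goal with |- context [sc ?x] =>
    lazymatch x with o => fail | _ => rewrite (succ_add_one x) end end;
  ring.

Definition leA (x y : B) : Prop := exists z, x +' z = y.
Local Notation "x <=' y" := (leA x y) (at level 70).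

Lemma add_cancel_r : forall z x y, x +' z = y +' z -> x = y.
Proof.
  intros z x y. revert z.
  ind (fImp (fEq (tPlus (tVar 1) (tVar 0)) (tPlus (tVar 2) (tVar 0))) (fEq (tVar 1) (tVar 2)))
      (scons B x (scons B y env0)).
  - rewrite !add_zero_r; auto.
  - intros b H E. rewrite !add_succ_r in E. apply H, succ_inj, E.
Qed.

Lemma add_cancel_l z x y : z +' x = z +' y -> x = y.
Proof. rewrite (add_comm z x), (add_comm z y). apply add_cancel_r. Qed.

Lemma add_eq_zero x y : x +' y = o -> x = o /\ y = o.
Proof.
  intros E. destruct (zero_or_succ y) as [->|[y' ->]].
  - rewrite add_zero_r in E; auto.
  - rewrite add_succ_r in E. exfalso; eapply succ_neq_zero; eauto.
Qed.

Lemma lt_iff_succ_le x y : x <' y <-> sc x <=' y.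
Proof. split; intros [z Hz]; exists z; rewrite <- Hz; sring. Qed.

Lemma le_refl x : x <=' x. Proof. exists o. apply add_zero_r. Qed.

Lemma le_trans x y z : x <=' y -> y <=' z -> x <=' z.
Proof. intros [a Ha] [b Hb]. exists (a +' b). rewrite <- Hb, <- Ha. ring. Qed.

Lemma le_zero_l x : o <=' x. Proof. exists x. apply add_zero_l. Qed.
Lemma le_add_r x y : x <=' x +' y. Proof. exists y; auto. Qed.
Lemma le_add_l x y : x <=' y +' x. Proof. exists y; ring. Qed.

Lemma lt_irrefl x : ~ x <' x.
Proof.
  intros [z Hz]. apply (succ_neq_zero z), (add_cancel_l x). rewrite Hz, add_zero_r. auto.
Qed.

Lemma le_antisymm x y : x <=' y -> y <=' x -> x = y.
Proof.
  intros [a Ha] [b Hb]. assert (E : x +' (a +' b) = x +' o).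
  { rewrite add_zero_r. rewrite <- Hb at 2. rewrite <- Ha. ring. }
  apply add_cancel_l, add_eq_zero in E. destruct E as [-> _].
  rewrite add_zero_r in Ha. auto.
Qed.

Lemma le_total : forall x y, x <=' y \/ y <=' x.
Proof.
  intros x y. revert x.
  ind (fEx (fOr (fEq (tPlus (tVar 1) (tVar 0)) (tVar 2)) (fEq (tPlus (tVar 2) (tVar 0)) (tVar 1))))
      (scons B y env0).
  - unfold leA; split; [intros [z [H|H]]; eauto | intros [[z H]|[z H]]; eauto].
  - left. apply le_zero_l.
  - intros b [[z Hz]|[z Hz]].
    + destruct (zero_or_succ z) as [->|[z' ->]].
      * right. exists (sc o). rewrite add_zero_r in Hz. subst. sring.
      * left. exists z'. rewrite <- Hz. sring.
    + right. exists (sc z). rewrite <- Hz. sring.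
Qed.

Lemma le_lteq x y : x <=' y <-> x <' y \/ x = y.
Proof.
  split.
  - intros [z Hz]. destruct (zero_or_succ z) as [->|[z' ->]].
    + right. rewrite add_zero_r in Hz. auto.
    + left. exists z'. auto.
  - intros [[z Hz]| ->]; [exists (sc z); auto | apply le_refl].
Qed.

Lemma lt_le_incl x y : x <' y -> x <=' y.
Proof. intros H; apply le_lteq; auto. Qed.

Lemma lt_or_le x y : x <' y \/ y <=' x.
Proof.
  destruct (le_total x y) as [H|H]; auto.
  apply le_lteq in H. destruct H as [H| ->]; auto. right; apply le_refl.
Qed.

Lemma lt_le_trans x y z : x <' y -> y <=' z -> x <' z.
Proof. rewrite !lt_iff_succ_le. apply le_trans. Qed.

Lemma le_lt_trans x y z : x <=' y -> y <' z -> x <' z.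
Proof.
  rewrite !lt_iff_succ_le. intros [a Ha] H. eapply le_trans; [|exact H].
  exists a. rewrite <- Ha. sring.
Qed.

Lemma lt_trans x y z : x <' y -> y <' z -> x <' z.
Proof. intros H1 H2. eapply lt_le_trans; eauto. apply lt_le_incl; auto. Qed.

Lemma le_not_lt x y : x <=' y -> ~ y <' x.
Proof. intros H1 H2. apply (lt_irrefl x). eapply le_lt_trans; eauto. Qed.

Lemma lt_not_le x y : x <' y -> ~ y <=' x.
Proof. intros H1 H2. apply (lt_irrefl x). eapply lt_le_trans; eauto. Qed.

Lemma not_lt_zero x : ~ x <' o.
Proof. intros [z Hz]. rewrite add_succ_r in Hz. eapply succ_neq_zero; eauto. Qed.

Lemma lt_succ_r x y : x <' sc y <-> x <=' y.
Proof.
  split.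
  - intros [z Hz]. exists z. apply succ_inj. rewrite <- Hz, add_succ_r. auto.
  - intros [z Hz]. exists z. rewrite add_succ_r, Hz. auto.
Qed.

Lemma lt_succ_diag_r x : x <' sc x. Proof. apply lt_succ_r, le_refl. Qed.
Lemma lt_zero_succ x : o <' sc x. Proof. apply lt_succ_r, le_zero_l. Qed.

Lemma le_zero_eq x : x <=' o -> x = o.
Proof. intros H. apply le_antisymm; auto. apply le_zero_l. Qed.

Lemma lt_neq_zero x y : x <' y -> y <> o.
Proof. intros H E. subst. eapply not_lt_zero; eauto. Qed.

Lemma neq_zero_lt_zero x : x <> o -> o <' x.
Proof. intros H. destruct (zero_or_succ x) as [->|[y ->]]; [congruence | apply lt_zero_succ]. Qed.

Lemma succ_le_mono x y : x <=' y -> sc x <=' sc y.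
Proof. intros [z Hz]. exists z. rewrite <- Hz. sring. Qed.

Lemma add_le_mono x y a b : x <=' y -> a <=' b -> x +' a <=' y +' b.
Proof. intros [z Hz] [w Hw]. exists (z +' w). rewrite <- Hz, <- Hw. ring. Qed.

Lemma add_lt_le_mono x y a b : x <' y -> a <=' b -> x +' a <' y +' b.
Proof.
  rewrite !lt_iff_succ_le. intros H1 H2.
  replace (sc (x +' a)) with (sc x +' a) by sring. apply add_le_mono; auto.
Qed.

Lemma mul_le_mono x y a b : x <=' y -> a <=' b -> x *' a <=' y *' b.
Proof.
  intros [z Hz] [w Hw]. exists (z *' a +' x *' w +' z *' w). rewrite <- Hz, <- Hw. ring.
Qed.

Lemma mul_eq_zero x y : x *' y = o -> x = o \/ y = o.
Proof.
  intros E. destruct (zero_or_succ x) as [->|[x' ->]]; auto.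
  destruct (zero_or_succ y) as [->|[y' ->]]; auto.
  rewrite mul_succ_r in E. apply add_eq_zero in E. destruct E as [_ E].
  exfalso. eapply succ_neq_zero; eauto.
Qed.

Lemma le_mul_diag_r x a : a <> o -> x <=' x *' a.
Proof.
  intros Ha. destruct (zero_or_succ a) as [->|[a' ->]]; [congruence|].
  exists (x *' a'). sring.
Qed.

Lemma double_le_cancel x y : x +' x <=' y +' y -> x <=' y.
Proof.
  intros H. destruct (lt_or_le y x) as [H1|H1]; auto.
  exfalso. apply (le_not_lt _ _ H), add_lt_le_mono, lt_le_incl; auto.
Qed.

Lemma double_inj x y : x +' x = y +' y -> x = y.
Proof. intros E. apply le_antisymm; apply double_le_cancel; rewrite E; apply le_refl. Qed.

Lemma even_or_odd : forall x, exists y, x = y +' y \/ x = sc (y +' y).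
Proof.
  ind (fEx (fOr (fEq (tVar 1) (tPlus (tVar 0) (tVar 0)))
                (fEq (tVar 1) (tSucc (tPlus (tVar 0) (tVar 0)))))) env0.
  - exists o. left. ring.
  - intros b [y [->| ->]].
    + exists y. right. auto.
    + exists (sc y). left. sring.
Qed.

Lemma div_mod_exists m : m <> o -> forall c, exists q r, c = q *' m +' r /\ r <' m.
Proof.
  intros Hm.
  ind (fEx (fEx (fAnd (fEq (tVar 2) (tPlus (tTimes (tVar 1) (tVar 3)) (tVar 0)))
          (fBEx (tVar 3) (fEq (tVar 0) (tVar 1)))))) (scons B m env0).
  - split; intros [q [r [H1 H2]]]; exists q, r; split; auto.
    + destruct H2 as [w [Hw ->]]; auto.
    + exists r; auto.
  - exists o, o. split; [ring | apply neq_zero_lt_zero; auto].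
  - intros b [q [r [-> Hr]]].
    apply lt_iff_succ_le, le_lteq in Hr. destruct Hr as [Hr|Hr].
    + exists q, (sc r). split; auto. sring.
    + exists (sc q), o. split; [rewrite <- Hr; sring | apply neq_zero_lt_zero; auto].
Qed.

Lemma div_mod_unique m q r q' r' :
  q *' m +' r = q' *' m +' r' -> r <' m -> r' <' m -> q = q' /\ r = r'.
Proof.
  intros E H1 H2.
  assert (K : forall a a' b b', a <' a' -> b <' m -> a *' m +' b = a' *' m +' b' -> False).
  { clear E H1 H2. intros a a' b b' Hq Hr E.
    apply lt_iff_succ_le in Hq. destruct Hq as [z Hz]. subst a'.
    assert (H : a *' m +' b <' a *' m +' m).
    { rewrite (add_comm (a *' m) b), (add_comm (a *' m) m).
      apply add_lt_le_mono; auto; apply le_refl. }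
    rewrite E in H. apply (lt_not_le _ _ H). exists (z *' m +' b'). sring. }
  destruct (lt_or_le q q') as [Hq|Hq]; [exfalso; eauto|].
  apply le_lteq in Hq. destruct Hq as [Hq| ->]; [exfalso; eauto|].
  split; auto. eapply add_cancel_l; eauto.
Qed.

Lemma mod_unique c m r r' : modA B c m r -> modA B c m r' -> r = r'.
Proof.
  intros [q [E1 H1]] [q' [E2 H2]]. rewrite E1 in E2.
  apply (div_mod_unique _ _ _ _ _ E2 H1 H2).
Qed.

Lemma mod_exists c m : m <> o -> exists r, modA B c m r.
Proof. intros Hm. destruct (div_mod_exists m Hm c) as [q [r [E H]]]. exists r, q. auto. Qed.

Lemma mod_small c m : c <' m -> modA B c m c.
Proof. intros H. exists o. split; auto. ring. Qed.

Lemma mod_add c m r b : modA B c m r -> modA B (c +' b *' m) m r.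
Proof. intros [q [E H]]. exists (q +' b). split; auto. rewrite E. ring. Qed.

Lemma mod_le c m r : modA B c m r -> r <=' c.
Proof. intros [q [E H]]. exists (q *' m). rewrite E. ring. Qed.

Lemma mod_modulus_neq_zero c m r : modA B c m r -> m <> o.
Proof. intros [q [E H]]. eapply lt_neq_zero; eauto. Qed.

Lemma mod_add_rev c m r b : modA B (c +' b *' m) m r -> modA B c m r.
Proof.
  intros H. destruct (mod_exists c m (mod_modulus_neq_zero _ _ _ H)) as [r' Hr'].
  rewrite (mod_unique _ _ _ _ H (mod_add _ _ _ b Hr')). auto.
Qed.

Lemma beta_exists c d k : exists a, betaA B c d k a.
Proof. apply mod_exists, succ_neq_zero. Qed.

Lemma beta_unique c d k a a' : betaA B c d k a -> betaA B c d k a' -> a = a'.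
Proof. apply mod_unique. Qed.

Lemma beta_le c d k a : betaA B c d k a -> a <=' c.
Proof. apply mod_le. Qed.

Lemma lt_mul_add_mul I J i j : i <' I -> j <' J -> i *' J +' j <' I *' J.
Proof.
  intros [z <-] Hj. apply lt_le_trans with (i *' J +' J).
  - rewrite (add_comm (i *' J) j), (add_comm (i *' J) J). apply add_lt_le_mono; auto. apply le_refl.
  - exists (z *' J). sring.
Qed.

Lemma lt_mul_add_mul_inv I J i j : i *' J +' j <' I *' J -> i <' I.
Proof.
  intros H. destruct (lt_or_le i I) as [H1|H1]; auto. exfalso.
  apply (lt_not_le _ _ H). eapply le_trans; [|apply le_add_r].
  apply mul_le_mono; auto. apply le_refl.
Qed.

Lemma pair_exists i j : exists z, pairA B i j z.
Proof.
  unfold pairA. set (s := i +' j).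
  destruct (even_or_odd s) as [y [Hy|Hy]].
  - exists (y *' sc s +' i). rewrite Hy. sring.
  - exists (sc (y +' y) *' sc y +' i). rewrite Hy. sring.
Qed.

Lemma pair_unique i j z z' : pairA B i j z -> pairA B i j z' -> z = z'.
Proof. unfold pairA. intros H1 H2. apply double_inj. congruence. Qed.

Lemma pair_le_l i j z : pairA B i j z -> i <=' z.
Proof. unfold pairA. intros H. apply double_le_cancel. rewrite H. apply le_add_l. Qed.

Lemma pair_le_r i j z : pairA B i j z -> j <=' z.
Proof.
  unfold pairA. intros H. apply double_le_cancel. rewrite H.
  replace ((i +' j) *' sc (i +' j) +' (i +' i))
    with ((i +' j) *' (i +' j) +' (i +' j +' (i +' i))) by sring.
  apply add_le_mono; [| apply le_trans with (i +' j); [apply le_add_l | apply le_add_r]].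
  destruct (zero_or_succ (i +' j)) as [E|[w E]].
  - rewrite E. apply add_eq_zero in E. destruct E as [-> ->]. apply le_zero_l.
  - apply le_trans with (i +' j); [apply le_add_l|].
    rewrite E. exists (w *' sc w). sring.
Qed.

(* The code of [(i, j)] is strictly increasing in [i + j], so equal codes force equal sums. *)
Lemma pair_inj i j i' j' z : pairA B i j z -> pairA B i' j' z -> i = i' /\ j = j'.
Proof.
  unfold pairA. intros H1 H2.
  assert (K : forall i j i' j', i +' j <' i' +' j' ->
     (i +' j) *' sc (i +' j) +' (i +' i) <' (i' +' j') *' sc (i' +' j') +' (i' +' i')).
  { clear H1 H2 i j i' j'. intros i j i' j' H. set (s := i +' j) in *. set (s' := i' +' j') in *.
    apply lt_le_trans with (s' *' sc s'); [|apply le_add_r].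
    apply lt_le_trans with (sc s *' sc (sc s)).
    - apply lt_le_trans with (s *' sc s +' (s +' s) +' sc o).
      + rewrite <- succ_add_one. apply lt_succ_r, add_le_mono; [apply le_refl|].
        apply add_le_mono; unfold s; apply le_add_r.
      + exists (sc o). unfold s. sring.
    - apply lt_iff_succ_le in H. apply mul_le_mono; auto. apply succ_le_mono. auto. }
  destruct (lt_or_le (i +' j) (i' +' j')) as [H|H].
  { exfalso. apply K in H. rewrite <- H1, <- H2 in H. eapply lt_irrefl; eauto. }
  apply le_lteq in H. destruct H as [H|H].
  { exfalso. apply K in H. rewrite <- H1, <- H2 in H. eapply lt_irrefl; eauto. }
  rewrite <- H in H1. rewrite H1 in H2. apply add_cancel_l, double_inj in H2.
  subst. split; auto. eapply add_cancel_l; eauto.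
Qed.

Lemma triple_exists i j v : exists t, tripleA B i j v t.
Proof.
  destruct (pair_exists j v) as [p Hp]. destruct (pair_exists i p) as [t Ht].
  exists t, p. auto.
Qed.

Lemma triple_unique i j v t t' : tripleA B i j v t -> tripleA B i j v t' -> t = t'.
Proof.
  intros [p [H1 H2]] [p' [H1' H2']]. rewrite (pair_unique _ _ _ _ H1 H1') in H2.
  eapply pair_unique; eauto.
Qed.

Lemma triple_inj i j v i' j' v' t :
  tripleA B i j v t -> tripleA B i' j' v' t -> i = i' /\ j = j' /\ v = v'.
Proof.
  intros [p [H1 H2]] [p' [H1' H2']].
  destruct (pair_inj _ _ _ _ _ H2 H2') as [-> ->].
  destruct (pair_inj _ _ _ _ _ H1 H1') as [-> ->]. auto.
Qed.

Lemma triple_le_r i j v t : tripleA B i j v t -> v <=' t.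
Proof.
  intros [p [H1 H2]]. eapply le_trans; [eapply pair_le_r; eauto | eapply pair_le_r; eauto].
Qed.

Lemma mem_le t s : memA B t s -> t <=' s.
Proof.
  intros [n [c [d [p [H1 [H2 [k [_ H3]]]]]]]].
  eapply le_trans; [eapply beta_le; eauto|]. eapply le_trans; [eapply pair_le_l; eauto|].
  eapply pair_le_r; eauto.
Qed.

(** * Δ0 definitions *)

Fixpoint lift (t : term) : term :=
  match t with
  | tVar n => tVar (S n)
  | tZero => tZero
  | tSucc u => tSucc (lift u)
  | tPlus u v => tPlus (lift u) (lift v)
  | tTimes u v => tTimes (lift u) (lift v)
  end.

Local Notation ev := (evalt B).

Lemma evalt_lift rho b t : ev (scons B b rho) (lift t) = ev rho t.
Proof. induction t; simpl; congruence. Qed.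

Definition fLt (a b : term) : formula := fBEx b (fEq (tVar 0) (lift a)).

Lemma sat_fLt rho a b : sat B rho (fLt a b) <-> ev rho a <' ev rho b.
Proof.
  unfold fLt; simpl. repeat setoid_rewrite evalt_lift.
  split; [intros [x [H ->]]; auto | intros H; eauto].
Qed.

Lemma delta0_fLt a b : is_delta0 (fLt a b) = true. Proof. reflexivity. Qed.
Opaque fLt.

Definition fLe (a b : term) : formula := fLt a (tSucc b).

Lemma sat_fLe rho a b : sat B rho (fLe a b) <-> ev rho a <=' ev rho b.
Proof. unfold fLe. rewrite sat_fLt. apply lt_succ_r. Qed.

Lemma delta0_fLe a b : is_delta0 (fLe a b) = true. Proof. reflexivity. Qed.
Opaque fLe.

Definition fmod (c m r : term) : formula :=
  fBEx (tSucc c) (fAnd (fEq (lift c) (tPlus (tTimes (tVar 0) (lift m)) (lift r)))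
                       (fLt (lift r) (lift m))).

Lemma sat_fmod rho c m r : sat B rho (fmod c m r) <-> modA B (ev rho c) (ev rho m) (ev rho r).
Proof.
  unfold fmod; simpl. setoid_rewrite sat_fLt. repeat setoid_rewrite evalt_lift. split.
  - intros [q [_ [H1 H2]]]. exists q. auto.
  - intros [q [H1 H2]]. exists q. split; auto. apply lt_succ_r. rewrite H1.
    apply le_trans with (q *' ev rho m); [|apply le_add_r].
    apply le_mul_diag_r. eapply lt_neq_zero; eauto.
Qed.

Lemma delta0_fmod c m r : is_delta0 (fmod c m r) = true. Proof. reflexivity. Qed.
Opaque fmod.

Definition fbeta (c d k v : term) : formula := fmod c (tSucc (tTimes (tSucc k) d)) v.

Lemma sat_fbeta rho c d k v :
  sat B rho (fbeta c d k v) <-> betaA B (ev rho c) (ev rho d) (ev rho k) (ev rho v).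
Proof. unfold fbeta. rewrite sat_fmod. reflexivity. Qed.

Lemma delta0_fbeta c d k v : is_delta0 (fbeta c d k v) = true. Proof. reflexivity. Qed.
Opaque fbeta.

Definition fpair (i j z : term) : formula :=
  fEq (tPlus z z) (tPlus (tTimes (tPlus i j) (tSucc (tPlus i j))) (tPlus i i)).

Lemma sat_fpair rho i j z : sat B rho (fpair i j z) <-> pairA B (ev rho i) (ev rho j) (ev rho z).
Proof. reflexivity. Qed.

Lemma delta0_fpair i j z : is_delta0 (fpair i j z) = true. Proof. reflexivity. Qed.
Opaque fpair.

Definition ftriple (i j v t : term) : formula :=
  fBEx (tSucc t) (fAnd (fpair (lift j) (lift v) (tVar 0)) (fpair (lift i) (tVar 0) (lift t))).

Lemma sat_ftriple rho i j v t :
  sat B rho (ftriple i j v t) <-> tripleA B (ev rho i) (ev rho j) (ev rho v) (ev rho t).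
Proof.
  unfold ftriple. simpl. setoid_rewrite sat_fpair. repeat setoid_rewrite evalt_lift. split.
  - intros [p [_ H]]. exists p. auto.
  - intros [p H]. exists p. split; auto. apply lt_succ_r. eapply pair_le_r, H.
Qed.

Lemma delta0_ftriple i j v t : is_delta0 (ftriple i j v t) = true. Proof. reflexivity. Qed.
Opaque ftriple.

Definition fmem (t s : term) : formula :=
  fBEx (tSucc s) (fBEx (tSucc (lift s)) (fBEx (tSucc (tVar 0)) (fBEx (tSucc (tVar 1))
    (fAnd (fpair (tVar 1) (tVar 0) (tVar 2))
    (fAnd (fpair (tVar 3) (tVar 2) (lift (lift (lift (lift s)))))
          (fBEx (tVar 3) (fbeta (tVar 2) (tVar 1) (tVar 0) (lift (lift (lift (lift (lift t)))))))))))).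

Lemma sat_fmem rho t s : sat B rho (fmem t s) <-> memA B (ev rho t) (ev rho s).
Proof.
  unfold fmem. simpl. setoid_rewrite sat_fbeta. setoid_rewrite sat_fpair.
  repeat setoid_rewrite evalt_lift. simpl. split.
  - intros [n [_ [p [_ [c [_ [d [_ [H1 [H2 [k [Hk H3]]]]]]]]]]]].
    exists n, c, d, p. eauto.
  - intros [n [c [d [p [H1 [H2 [k [Hk H3]]]]]]]].
    exists n. split; [apply lt_succ_r; eapply pair_le_l; eauto|].
    exists p. split; [apply lt_succ_r; eapply pair_le_r; eauto|].
    exists c. split; [apply lt_succ_r; eapply pair_le_l; eauto|].
    exists d. split; [apply lt_succ_r; eapply pair_le_r; eauto|].
    eauto.
Qed.

Lemma delta0_fmem t s : is_delta0 (fmem t s) = true. Proof. reflexivity. Qed.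
Opaque fmem.

(* Δ0-definable relations with parameters: the formula receives terms for the parameters, the
   semantics their values. *)
Record drel2 := {
  drel2_form : (nat -> term) -> term -> term -> formula;
  drel2_sem : (nat -> B) -> B -> B -> Prop;
  sat_drel2 : forall rho ps x y,
    sat B rho (drel2_form ps x y) <-> drel2_sem (fun i => ev rho (ps i)) (ev rho x) (ev rho y);
  delta0_drel2 : forall ps x y, is_delta0 (drel2_form ps x y) = true }.

Record drel3 := {
  drel3_form : (nat -> term) -> term -> term -> term -> formula;
  drel3_sem : (nat -> B) -> B -> B -> B -> Prop;
  sat_drel3 : forall rho ps x y z,
    sat B rho (drel3_form ps x y z)
    <-> drel3_sem (fun i => ev rho (ps i)) (ev rho x) (ev rho y) (ev rho z);
  delta0_drel3 : forall ps x y z, is_delta0 (drel3_form ps x y z) = true }.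

Ltac sat_simpl :=
  simpl;
  repeat (first [ setoid_rewrite sat_fLe | setoid_rewrite sat_fLt | setoid_rewrite sat_fmod
                | setoid_rewrite sat_fbeta | setoid_rewrite sat_fpair | setoid_rewrite sat_ftriple
                | setoid_rewrite sat_fmem | setoid_rewrite evalt_lift
                | setoid_rewrite sat_drel2 | setoid_rewrite sat_drel3 ]; simpl).

Ltac delta0_tac :=
  simpl;
  repeat (rewrite ?delta0_fLt, ?delta0_fLe, ?delta0_fmod, ?delta0_fbeta, ?delta0_fpair,
                  ?delta0_ftriple, ?delta0_fmem, ?delta0_drel2, ?delta0_drel3; simpl);
  reflexivity.

Ltac indf phi rho :=
  match goal with |- forall b, @?P b =>
    apply (sigma1_ind phi rho P); [delta0_tac | intro | | ] end.

(** * Collection and β-coding of sequences *)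

Lemma delta0_collection (chi : drel2) p n :
  (forall k, k <' n -> exists x, drel2_sem chi p k x) ->
  exists W, forall k, k <' n -> exists x, x <' W /\ drel2_sem chi p k x.
Proof.
  intros H.
  cut (forall m, exists W, forall k, k <' m -> k <' n -> exists x, x <' W /\ drel2_sem chi p k x).
  { intros K. destruct (K n) as [W HW]. exists W. auto. }
  indf (fEx (fBAll (tVar 1) (fImp (fLt (tVar 0) (tVar 3))
          (fBEx (tVar 1) (drel2_form chi (fun i => tVar (5 + i)) (tVar 1) (tVar 0))))))
       (scons B n p).
  - sat_simpl. reflexivity.
  - exists o. intros k Hk. exfalso. eapply not_lt_zero; eauto.
  - intros m [W HW]. destruct (lt_or_le m n) as [Hm|Hm].
    + destruct (H m Hm) as [x Hx]. exists (W +' sc x). intros k Hk Hkn.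
      apply lt_succ_r, le_lteq in Hk. destruct Hk as [Hk| ->].
      * destruct (HW k Hk Hkn) as [y [Hy1 Hy2]]. exists y. split; auto.
        eapply lt_le_trans; eauto. apply le_add_r.
      * exists x. split; auto. rewrite add_succ_r. apply lt_succ_r, le_add_l.
    + exists W. intros k Hk Hkn. apply lt_succ_r, le_lteq in Hk. destruct Hk as [Hk| ->]; auto.
      exfalso. eapply le_not_lt; eauto.
Qed.

Lemma exists_common_multiple V : forall N, exists d, d <> o /\ V <=' d /\
  forall e, e <' sc N -> e <> o -> exists x, x *' e = d.
Proof.
  indf (fEx (fAnd (fNot (fEq (tVar 0) tZero)) (fAnd (fLe (tVar 2) (tVar 0))
      (fBAll (tSucc (tVar 1)) (fOr (fEq (tVar 0) tZero)
        (fBEx (tSucc (tVar 1)) (fEq (tTimes (tVar 0) (tVar 1)) (tVar 2))))))))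
       (scons B V env0).
  - sat_simpl. setoid_rewrite lt_succ_r. split.
    + intros [d [H1 [H2 H3]]]. exists d. split; [auto | split; [auto|]].
      intros e He He0. destruct (H3 e He) as [H|[x [_ Hx]]]; [congruence | eauto].
    + intros [d [H1 [H2 H3]]]. exists d. split; [auto | split; [auto|]].
      intros e He. destruct (classic (e = o)) as [E|E]; auto. right.
      destruct (H3 e He E) as [x Hx]. exists x. split; auto.
      rewrite <- Hx. apply le_mul_diag_r; auto.
  - exists (sc V). split; [apply succ_neq_zero|]. split; [exists (sc o); sring|].
    intros e He He0. exfalso. apply He0, le_zero_eq, lt_succ_r, He.
  - intros N [d [H1 [H2 H3]]]. exists (d *' sc N). split.
    { intros E. apply mul_eq_zero in E. destruct E; [congruence | eapply succ_neq_zero; eauto]. }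
    split; [eapply le_trans; eauto; apply le_mul_diag_r, succ_neq_zero|].
    intros e He He0. apply lt_succ_r, le_lteq in He. destruct He as [He| ->].
    + destruct (H3 e He He0) as [x Hx]. exists (x *' sc N). rewrite <- Hx. ring.
    + exists d. auto.
Qed.

Definition beta_modulus (d k : B) : B := sc (sc k *' d).

Definition invertible_mod (Q m : B) : Prop := exists u, u <' m /\ modA B (u *' Q) m (sc o).

Lemma invertible_mod_intro Q m u : modA B (u *' Q) m (sc o) -> invertible_mod Q m.
Proof.
  intros H. destruct (div_mod_exists m (mod_modulus_neq_zero _ _ _ H) u) as [a [u' [-> Hu']]].
  exists u'. split; auto. apply (mod_add_rev _ _ _ (a *' Q)).
  replace (u' *' Q +' a *' Q *' m) with ((a *' m +' u') *' Q) by ring. auto.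
Qed.

Lemma invertible_mod_mul Q1 Q2 m :
  invertible_mod Q1 m -> invertible_mod Q2 m -> invertible_mod (Q1 *' Q2) m.
Proof.
  intros [u1 [_ [q1 [E1 H1]]]] [u2 [_ [q2 [E2 H2]]]].
  apply (invertible_mod_intro _ _ (u1 *' u2)).
  exists (q1 *' q2 *' m +' q1 +' q2). split; auto.
  replace (u1 *' u2 *' (Q1 *' Q2)) with ((u1 *' Q1) *' (u2 *' Q2)) by ring.
  rewrite E1, E2. sring.
Qed.

(* Write [d = e f] with [e = k - n].  Modulo [beta_modulus d k] we have [(k+1) d ≡ -1] and
   [(k+1) (beta_modulus d n) ≡ e], so [u = (k+1)^3 d f ≡ -(k+1)^2 f] inverts [beta_modulus d n]. *)
Lemma beta_modulus_invertible d N n k : d <> o ->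
  (forall e, e <' sc N -> e <> o -> exists x, x *' e = d) ->
  n <' k -> k <=' N -> invertible_mod (beta_modulus d n) (beta_modulus d k).
Proof.
  intros Hd Hdiv [h Hh] HkN.
  destruct (Hdiv (sc h)) as [f Hf]; [|apply succ_neq_zero|].
  { apply lt_succ_r. eapply le_trans; [|exact HkN]. exists n. rewrite <- Hh. ring. }
  destruct (zero_or_succ f) as [->|[g ->]]; [rewrite mul_zero_l in Hf; congruence|].
  subst d k. unfold beta_modulus.
  set (A := sc (n +' sc h)).
  apply (invertible_mod_intro _ _ (A *' A *' A *' (sc g *' sc h) *' sc g)).
  exists (A *' A *' sc g *' sc g *' sc h *' sc n +' A *' sc h *' g +' A *' h +' n +' h +' sc o).
  split.
  - unfold A. sring.
  - apply lt_succ_r. exists ((n +' sc h) *' (sc g *' sc h) +' (g *' sc h +' h)). unfold A. sring.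
Qed.

Lemma lt_beta_modulus a d k : a <=' d -> a <' beta_modulus d k.
Proof.
  intros H. apply lt_succ_r. eapply le_trans; eauto. exists (k *' d). sring.
Qed.

Section BetaCode.

Variables (phi : drel3) (iota : drel2) (p : nat -> B) (N d : B).
Hypothesis d_neq_zero : d <> o.
Hypothesis d_divisible : forall e, e <' sc N -> e <> o -> exists x, x *' e = d.
Hypothesis iota_zero : exists a, a <=' d /\ drel2_sem iota p o a.
Hypothesis iota_step : forall k a, k <' N -> drel2_sem iota p k a ->
  exists v, v <=' d /\ drel3_sem phi p k a v /\ drel2_sem iota p (sc k) v.

(* [c] codes the first [n+1] terms and [Q] is a common multiple of their moduli; the last clause
   says that [Q] is invertible modulo every later modulus, which the Chinese remainder step needs. *)
Definition code_invariant (n c Q : B) : Prop :=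
  (forall k, k <=' n -> exists a, betaA B c d k a /\ drel2_sem iota p k a) /\
  (forall k, k <' n -> exists a v,
     betaA B c d k a /\ betaA B c d (sc k) v /\ drel3_sem phi p k a v) /\
  (forall k, k <=' n -> exists x, x *' beta_modulus d k = Q) /\
  (forall k, k <=' N -> k <=' n \/ invertible_mod Q (beta_modulus d k)).

Lemma code_invariant_zero : exists c Q, code_invariant o c Q.
Proof.
  destruct iota_zero as [a0 [Ha0d Ha0]].
  exists a0, (beta_modulus d o). split; [|split; [|split]].
  - intros k Hk. apply le_zero_eq in Hk. subst k.
    exists a0. split; auto. apply mod_small, lt_beta_modulus; auto.
  - intros k Hk. exfalso; eapply not_lt_zero; eauto.
  - intros k Hk. apply le_zero_eq in Hk. subst k. exists (sc o). ring.
  - intros k Hk. destruct (lt_or_le o k) as [H|H]; [right | left; auto].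
    apply (beta_modulus_invertible d N); auto.
Qed.

(* Chinese remainder step: [c'] agrees with [c] modulo the moduli dividing [Q] and is [≡ v]
   modulo the next modulus [m], because [u Q ≡ 1 (mod m)]. *)
Lemma code_invariant_succ n c Q : n <' N -> code_invariant n c Q ->
  exists c' Q', code_invariant (sc n) c' Q'.
Proof.
  intros HnN [SA [SB [SC SD]]].
  destruct (SA n (le_refl n)) as [a [Ha Hia]].
  destruct (iota_step n a HnN Hia) as [v [Hvd [Hphi Hiv]]].
  set (m := beta_modulus d (sc n)).
  destruct (SD (sc n)) as [Hc|[u [_ [q [Hu _]]]]].
  { apply lt_iff_succ_le; auto. }
  { exfalso. eapply lt_irrefl. apply lt_succ_r; eauto. }
  set (E := sc (sc n) *' d).
  set (c' := c +' (v +' E *' c) *' u *' Q).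
  assert (Hnew : betaA B c' d (sc n) v).
  { replace c' with (v +' (c +' (v +' E *' c) *' q) *' m).
    - apply mod_add, mod_small, lt_beta_modulus; auto.
    - unfold c'. rewrite mul_assoc, Hu. unfold m, E, beta_modulus. sring. }
  assert (Hold : forall k a, k <=' n -> betaA B c d k a -> betaA B c' d k a).
  { intros k a' Hk Hb. destruct (SC k Hk) as [x Hx]. unfold c'. rewrite <- Hx.
    replace (c +' (v +' E *' c) *' u *' (x *' beta_modulus d k))
      with (c +' ((v +' E *' c) *' u *' x) *' beta_modulus d k) by ring.
    apply mod_add. auto. }
  exists c', (Q *' m). split; [|split; [|split]].
  - intros k Hk. apply le_lteq in Hk. destruct Hk as [Hk| ->]; [|eauto].
    apply lt_succ_r in Hk. destruct (SA k Hk) as [a' [Hb Hi]]. eauto.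
  - intros k Hk. apply lt_succ_r, le_lteq in Hk. destruct Hk as [Hk| ->].
    + destruct (SB k Hk) as [a' [v' [Hb1 [Hb2 Hp]]]].
      exists a', v'. split; [apply Hold; auto; apply lt_le_incl; auto|].
      split; auto. apply Hold; auto. apply lt_iff_succ_le; auto.
    + exists a, v. split; [apply Hold; auto; apply le_refl | auto].
  - intros k Hk. apply le_lteq in Hk. destruct Hk as [Hk| ->].
    + apply lt_succ_r in Hk. destruct (SC k Hk) as [x Hx].
      exists (x *' m). rewrite <- Hx. ring.
    + exists Q. reflexivity.
  - intros k Hk. destruct (lt_or_le (sc n) k) as [Hnk|H]; [right | left; auto].
    destruct (SD k Hk) as [H'|HQ'].
    { exfalso. apply (lt_not_le _ _ Hnk), (le_trans _ _ _ H'), lt_le_incl, lt_succ_diag_r. }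
    apply invertible_mod_mul; [exact HQ'|].
    apply (beta_modulus_invertible d N); auto.
Qed.

Definition fcode_invariant : formula :=
  fEx (fEx (fImp (fLe (tVar 2) (tVar 4))
    (fAnd (fBAll (tSucc (tVar 2)) (fBEx (tSucc (tVar 2))
             (fAnd (fbeta (tVar 3) (tVar 5) (tVar 1) (tVar 0))
                   (drel2_form iota (fun i => tVar (7 + i)) (tVar 1) (tVar 0)))))
    (fAnd (fBAll (tVar 2) (fBEx (tSucc (tVar 2)) (fBEx (tSucc (tVar 3))
             (fAnd (fbeta (tVar 4) (tVar 6) (tVar 2) (tVar 1))
             (fAnd (fbeta (tVar 4) (tVar 6) (tSucc (tVar 2)) (tVar 0))
                   (drel3_form phi (fun i => tVar (8 + i)) (tVar 2) (tVar 1) (tVar 0)))))))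
    (fAnd (fBAll (tSucc (tVar 2)) (fBEx (tSucc (tVar 1))
             (fEq (tTimes (tVar 0) (tSucc (tTimes (tSucc (tVar 1)) (tVar 5)))) (tVar 2))))
          (fBAll (tSucc (tVar 4)) (fOr (fLe (tVar 0) (tVar 3))
             (fBEx (tSucc (tTimes (tSucc (tVar 0)) (tVar 4)))
                (fmod (tTimes (tVar 0) (tVar 2)) (tSucc (tTimes (tSucc (tVar 1)) (tVar 5)))
                      (tSucc tZero)))))))))).

Lemma sat_fcode_invariant n :
  sat B (scons B n (scons B d (scons B N p))) fcode_invariant
  <-> exists c Q, n <=' N -> code_invariant n c Q.
Proof.
  unfold fcode_invariant, code_invariant. sat_simpl. setoid_rewrite lt_succ_r.
  assert (Hm : forall k, beta_modulus d k <> o) by (intros; apply succ_neq_zero).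
  assert (Hx : forall x k Q, x *' beta_modulus d k = Q -> x <=' Q).
  { intros x k Q <-. apply le_mul_diag_r, Hm. }
  split; intros [c [Q H]]; exists c, Q; intros HnN;
    destruct (H HnN) as [SA [SB [SC SD]]]; (split; [|split; [|split]]).
  - intros k Hk. destruct (SA k Hk) as [a [_ Ha]]. eauto.
  - intros k Hk. destruct (SB k Hk) as [a [_ [v [_ Hav]]]]. eauto.
  - intros k Hk. destruct (SC k Hk) as [x [_ E]]. eauto.
  - intros k Hk. destruct (SD k Hk) as [H'|[u [Hu Hmod]]]; [left | right]; auto.
    exists u. split; auto. apply lt_succ_r, Hu.
  - intros k Hk. destruct (SA k Hk) as [a [Hb Ha]]. exists a. split; eauto. eapply beta_le; eauto.
  - intros k Hk. destruct (SB k Hk) as [a [v [Ha [Hv Hp]]]].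
    exists a. split; [eapply beta_le; eauto|]. exists v. split; [eapply beta_le; eauto | auto].
  - intros k Hk. destruct (SC k Hk) as [x E]. exists x. split; eauto.
  - intros k Hk. destruct (SD k Hk) as [H'|[u [Hu Hmod]]]; [left | right]; auto.
    exists u. split; auto. apply lt_succ_r, Hu.
Qed.

Lemma beta_code_rec_common_multiple : exists c,
  (forall k, k <=' N -> exists a, betaA B c d k a /\ drel2_sem iota p k a) /\
  (forall k a v, k <' N -> betaA B c d k a -> betaA B c d (sc k) v -> drel3_sem phi p k a v).
Proof.
  assert (Hall : forall n, exists c Q, n <=' N -> code_invariant n c Q).
  { indf fcode_invariant (scons B d (scons B N p)).
    - apply sat_fcode_invariant.
    - destruct code_invariant_zero as [c [Q H]]. eauto.
    - intros n [c [Q IH]]. destruct (classic (sc n <=' N)) as [HnN|HnN].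
      + destruct (code_invariant_succ n c Q) as [c' [Q' H']]; eauto.
        * apply lt_iff_succ_le; auto.
        * apply IH, (le_trans _ (sc n)); auto. apply lt_le_incl, lt_succ_diag_r.
      + exists o, o. intros H. contradiction. }
  destruct (Hall N) as [c [Q H]]. destruct (H (le_refl N)) as [SA [SB _]].
  exists c. split; auto.
  intros k a v Hk Ha Hv. destruct (SB k Hk) as [a' [v' [Ha' [Hv' Hp]]]].
  rewrite (beta_unique _ _ _ _ _ Ha Ha'), (beta_unique _ _ _ _ _ Hv Hv'). auto.
Qed.

End BetaCode.

Lemma beta_code_rec (phi : drel3) (iota : drel2) p V N :
  (exists a, a <=' V /\ drel2_sem iota p o a) ->
  (forall k a, k <' N -> drel2_sem iota p k a ->
     exists v, v <=' V /\ drel3_sem phi p k a v /\ drel2_sem iota p (sc k) v) ->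
  exists c d,
    (forall k, k <=' N -> exists a, betaA B c d k a /\ drel2_sem iota p k a) /\
    (forall k a v, k <' N -> betaA B c d k a -> betaA B c d (sc k) v -> drel3_sem phi p k a v).
Proof.
  intros [a0 [Ha0 Hi0]] Hstep.
  destruct (exists_common_multiple V N) as [d [Hd0 [HVd Hdiv]]].
  destruct (beta_code_rec_common_multiple phi iota p N d Hd0 Hdiv) as [c Hc]; eauto.
  - exists a0. split; eauto. eapply le_trans; eauto.
  - intros k a Hk Ha. destruct (Hstep k a Hk Ha) as [v [Hv H]].
    exists v. split; auto. eapply le_trans; eauto.
Qed.

Definition drel3_true : drel3.
Proof.
  refine {| drel3_form := fun _ _ _ _ => fEq tZero tZero; drel3_sem := fun _ _ _ _ => True |}.
  - intros. simpl. tauto.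
  - reflexivity.
Defined.

Lemma beta_code_choice (iota : drel2) p V n :
  (forall k, k <' n -> exists a, a <=' V /\ drel2_sem iota p k a) ->
  exists c d, forall k, k <' n -> exists a, betaA B c d k a /\ drel2_sem iota p k a.
Proof.
  intros H. destruct (zero_or_succ n) as [->|[N ->]].
  - exists o, o. intros k Hk. exfalso. eapply not_lt_zero; eauto.
  - destruct (beta_code_rec drel3_true iota p V N) as [c [d [Hc _]]].
    + apply H, lt_zero_succ.
    + intros k a Hk _. destruct (H (sc k)) as [v [Hv Hi]].
      * apply lt_succ_r, lt_iff_succ_le, Hk.
      * exists v. simpl. auto.
    + exists c, d. intros k Hk. apply Hc, lt_succ_r, Hk.
Qed.

(** * Codes of matrix blocks and of partial sums *)

Definition codes_block (F : B -> B -> B) (I J s : B) : Prop :=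
  forall t, memA B t s <-> exists i k v, tripleA B i k v t /\ (i <' I /\ k <' J /\ v = F i k).

Definition coded_entry (s i k v : B) : Prop := exists t, tripleA B i k v t /\ memA B t s.

Lemma coded_entry_le s i k v : coded_entry s i k v -> v <=' s.
Proof. intros [t [H1 H2]]. eapply le_trans; [eapply triple_le_r; eauto | apply mem_le; auto]. Qed.

Lemma coded_entry_iff F I J s i k y : codes_block F I J s -> i <' I -> k <' J ->
  coded_entry s i k y <-> y = F i k.
Proof.
  intros Hs Hi Hk. split.
  - intros [t [Ht Hm]]. apply Hs in Hm. destruct Hm as [i' [k' [v' [Ht' [_ [_ ->]]]]]].
    destruct (triple_inj _ _ _ _ _ _ _ Ht Ht') as [-> [-> ->]]. auto.
  - intros ->. destruct (triple_exists i k (F i k)) as [t Ht]. exists t. split; auto.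
    apply Hs. exists i, k, (F i k). auto.
Qed.

Definition fcoded_entry (s i k v : term) : formula :=
  fBEx (tSucc s) (fAnd (ftriple (lift i) (lift k) (lift v) (tVar 0)) (fmem (tVar 0) (lift s))).

Lemma sat_fcoded_entry rho s i k v :
  sat B rho (fcoded_entry s i k v) <-> coded_entry (ev rho s) (ev rho i) (ev rho k) (ev rho v).
Proof.
  unfold fcoded_entry, coded_entry. sat_simpl. split.
  - intros [t [_ H]]. eauto.
  - intros [t H]. exists t. split; auto. apply lt_succ_r, mem_le, H.
Qed.
Opaque fcoded_entry.

Definition coded_term (i j sM sN k x : B) : Prop :=
  exists y z, x = y *' z /\ coded_entry sM i k y /\ coded_entry sN k j z.

Definition fcoded_term (i j sM sN k x : term) : formula :=
  fBEx (tSucc sM) (fBEx (tSucc (lift sN)) (fAnd (fEq (lift (lift x)) (tTimes (tVar 1) (tVar 0)))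
    (fAnd (fcoded_entry (lift (lift sM)) (lift (lift i)) (lift (lift k)) (tVar 1))
          (fcoded_entry (lift (lift sN)) (lift (lift k)) (lift (lift j)) (tVar 0))))).

Lemma sat_fcoded_term rho i j sM sN k x : sat B rho (fcoded_term i j sM sN k x) <->
  coded_term (ev rho i) (ev rho j) (ev rho sM) (ev rho sN) (ev rho k) (ev rho x).
Proof.
  unfold fcoded_term, coded_term. sat_simpl. setoid_rewrite sat_fcoded_entry. sat_simpl. split.
  - intros [y [_ [z [_ H]]]]. eauto.
  - intros [y [z H]]. exists y. split; [apply lt_succ_r; eapply coded_entry_le, H|].
    exists z. split; auto. apply lt_succ_r. eapply coded_entry_le, H.
Qed.
Opaque fcoded_term.

Definition coded_step (i j sM sN k a v : B) : Prop :=
  exists x, v = a +' x /\ coded_term i j sM sN k x.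

Definition fcoded_step (i j sM sN k a v : term) : formula :=
  fBEx (tSucc v) (fAnd (fEq (lift v) (tPlus (lift a) (tVar 0)))
                       (fcoded_term (lift i) (lift j) (lift sM) (lift sN) (lift k) (tVar 0))).

Lemma sat_fcoded_step rho i j sM sN k a v : sat B rho (fcoded_step i j sM sN k a v) <->
  coded_step (ev rho i) (ev rho j) (ev rho sM) (ev rho sN) (ev rho k) (ev rho a) (ev rho v).
Proof.
  unfold fcoded_step, coded_step. sat_simpl. setoid_rewrite sat_fcoded_term. sat_simpl. split.
  - intros [x [_ H]]. eauto.
  - intros [x [H1 H2]]. exists x. split; auto. apply lt_succ_r. rewrite H1. apply le_add_l.
Qed.

Lemma delta0_fcoded_step i j sM sN k a v : is_delta0 (fcoded_step i j sM sN k a v) = true.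
Proof. unfold fcoded_step. delta0_tac. Qed.
Opaque fcoded_step.

Definition coded_psum (i j sM sN K c d v : B) : Prop :=
  betaA B c d o o /\
  (forall k, k <' K -> exists a w,
     betaA B c d k a /\ betaA B c d (sc k) w /\ coded_step i j sM sN k a w) /\
  betaA B c d K v.

Definition fcoded_psum (i j sM sN K c d v : term) : formula :=
  fAnd (fbeta c d tZero tZero)
 (fAnd (fBAll K (fBEx (tSucc (lift c)) (fBEx (tSucc (lift (lift c)))
         (fAnd (fbeta (lift (lift (lift c))) (lift (lift (lift d))) (tVar 2) (tVar 1))
         (fAnd (fbeta (lift (lift (lift c))) (lift (lift (lift d))) (tSucc (tVar 2)) (tVar 0))
               (fcoded_step (lift (lift (lift i))) (lift (lift (lift j))) (lift (lift (lift sM)))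
                            (lift (lift (lift sN))) (tVar 2) (tVar 1) (tVar 0)))))))
       (fbeta c d K v)).

Lemma sat_fcoded_psum rho i j sM sN K c d v : sat B rho (fcoded_psum i j sM sN K c d v) <->
  coded_psum (ev rho i) (ev rho j) (ev rho sM) (ev rho sN) (ev rho K) (ev rho c) (ev rho d)
             (ev rho v).
Proof.
  unfold fcoded_psum, coded_psum. sat_simpl. setoid_rewrite sat_fcoded_step. sat_simpl. split.
  - intros [H1 [H2 H3]]. split; auto. split; auto. intros k Hk.
    destruct (H2 k Hk) as [a [_ [w [_ H]]]]. eauto.
  - intros [H1 [H2 H3]]. split; auto. split; auto. intros k Hk.
    destruct (H2 k Hk) as [a [w [Ha [Hw Hp]]]].
    exists a. split; [apply lt_succ_r; eapply beta_le; eauto|].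
    exists w. split; [apply lt_succ_r; eapply beta_le; eauto | auto].
Qed.
Opaque fcoded_psum.

(* The [k]-th entry of the block [I × J] in row-major order, [k = i J + j], with all witnesses
   bounded by [W] so that collection applies. *)
Definition coded_psum_entry (W J K sM sN k t : B) : Prop :=
  exists i j c d v, i <' W /\ j <' W /\ c <' W /\ d <' W /\ v <' W /\
    k = i *' J +' j /\ j <' J /\ coded_psum i j sM sN K c d v /\ tripleA B i j v t.

Lemma coded_psum_entry_mono w W J K sM sN k t :
  coded_psum_entry w J K sM sN k t -> w <=' W -> coded_psum_entry W J K sM sN k t.
Proof.
  intros [i [j [c [d [v [H1 [H2 [H3 [H4 [H5 H6]]]]]]]]]] Hw.
  exists i, j, c, d, v. do 5 (split; [eapply lt_le_trans; eauto|]). exact H6.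
Qed.

Definition fcoded_psum_entry (W J K sM sN k t : term) : formula :=
  fBEx W (fBEx (lift W) (fBEx (lift (lift W)) (fBEx (lift (lift (lift W)))
    (fBEx (lift (lift (lift (lift W))))
   (fAnd (fEq (lift (lift (lift (lift (lift k)))))
              (tPlus (tTimes (tVar 4) (lift (lift (lift (lift (lift J)))))) (tVar 3)))
   (fAnd (fLt (tVar 3) (lift (lift (lift (lift (lift J))))))
   (fAnd (fcoded_psum (tVar 4) (tVar 3) (lift (lift (lift (lift (lift sM)))))
            (lift (lift (lift (lift (lift sN))))) (lift (lift (lift (lift (lift K)))))
            (tVar 2) (tVar 1) (tVar 0))
         (ftriple (tVar 4) (tVar 3) (tVar 0) (lift (lift (lift (lift (lift t))))))))))))).

Lemma sat_fcoded_psum_entry rho W J K sM sN k t :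
  sat B rho (fcoded_psum_entry W J K sM sN k t) <->
  coded_psum_entry (ev rho W) (ev rho J) (ev rho K) (ev rho sM) (ev rho sN) (ev rho k) (ev rho t).
Proof.
  unfold fcoded_psum_entry, coded_psum_entry. sat_simpl. setoid_rewrite sat_fcoded_psum.
  sat_simpl. split.
  - intros [i [Hi [j [Hj [c [Hc [d [Hd [v [Hv H]]]]]]]]]]. exists i, j, c, d, v. tauto.
  - intros [i [j [c [d [v H]]]]]. exists i. split; [tauto|]. exists j. split; [tauto|].
    exists c. split; [tauto|]. exists d. split; [tauto|]. exists v. tauto.
Qed.

Lemma delta0_fcoded_psum_entry W J K sM sN k t :
  is_delta0 (fcoded_psum_entry W J K sM sN k t) = true.
Proof. unfold fcoded_psum_entry. delta0_tac. Qed.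
Opaque fcoded_psum_entry.

Definition step_rel : drel3.
Proof.
  refine {| drel3_form := fun ps k a v => fcoded_step (ps 0%nat) (ps 1%nat) (ps 2%nat) (ps 3%nat) k a v;
            drel3_sem := fun p k a v => coded_step (p 0%nat) (p 1%nat) (p 2%nat) (p 3%nat) k a v |}.
  - intros. apply sat_fcoded_step.
  - intros. apply delta0_fcoded_step.
Defined.

Definition psum_bound_rel : drel2.
Proof.
  refine {| drel2_form := fun ps k a => fLe a (tTimes k (ps 4%nat));
            drel2_sem := fun p k a => a <=' k *' p 4%nat |}.
  - intros. apply sat_fLe.
  - intros. apply delta0_fLe.
Defined.

Definition entry_rel : drel2.
Proof.
  refine {| drel2_form := fun ps k t =>
              fcoded_psum_entry (ps 4%nat) (ps 0%nat) (ps 1%nat) (ps 2%nat) (ps 3%nat) k t;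
            drel2_sem := fun p k t =>
              coded_psum_entry (p 4%nat) (p 0%nat) (p 1%nat) (p 2%nat) (p 3%nat) k t |}.
  - intros. apply sat_fcoded_psum_entry.
  - intros. apply delta0_fcoded_psum_entry.
Defined.

Definition entry_bound_rel : drel2.
Proof.
  refine {| drel2_form := fun ps k w =>
              fBEx w (fcoded_psum_entry (lift w) (lift (ps 0%nat)) (lift (ps 1%nat))
                        (lift (ps 2%nat)) (lift (ps 3%nat)) (lift k) (tVar 0));
            drel2_sem := fun p k w => exists t, t <' w /\
              coded_psum_entry w (p 0%nat) (p 1%nat) (p 2%nat) (p 3%nat) k t |}.
  - intros. simpl. setoid_rewrite sat_fcoded_psum_entry. repeat setoid_rewrite evalt_lift.
    reflexivity.
  - intros. apply delta0_fcoded_psum_entry.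
Defined.

(** * Products of good matrices *)

Section Product.

Variables M N : B -> B -> B.

Definition psum (i j K c d v : B) : Prop :=
  betaA B c d o o /\
  (forall k a, k <' K -> betaA B c d k a -> betaA B c d (sc k) (a +' M i k *' N k j)) /\
  betaA B c d K v.

Definition vanishes_from (i j K : B) : Prop := forall k, ~ k <' K -> M i k *' N k j = o.

Definition codes_terms (i j sM sN K : B) : Prop :=
  forall k, k <' K -> forall x, coded_term i j sM sN k x <-> x = M i k *' N k j.

Lemma codes_terms_of_blocks I K J sM sN i j :
  codes_block M I K sM -> codes_block N K J sN -> i <' I -> j <' J -> codes_terms i j sM sN K.
Proof.
  intros HsM HsN Hi Hj k Hk x. split.
  - intros [y [z [-> [Hy Hz]]]].
    rewrite (coded_entry_iff M I K sM i k y HsM Hi Hk) in Hy.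
    rewrite (coded_entry_iff N K J sN k j z HsN Hk Hj) in Hz. subst. auto.
  - intros ->. exists (M i k), (N k j). split; auto. split.
    + apply (coded_entry_iff M I K sM); auto.
    + apply (coded_entry_iff N K J sN); auto.
Qed.

Lemma coded_psum_iff i j sM sN K c d v : codes_terms i j sM sN K ->
  coded_psum i j sM sN K c d v <-> psum i j K c d v.
Proof.
  intros HX. split; intros [H0 [HS HK]]; (split; [exact H0 | split; [|exact HK]]).
  - intros k a Hk Ha. destruct (HS k Hk) as [a' [w [Ha' [Hw [x [Ex Hx]]]]]].
    rewrite (beta_unique _ _ _ _ _ Ha Ha'). apply (HX k Hk) in Hx. subst. auto.
  - intros k Hk. destruct (beta_exists c d k) as [a Ha].
    exists a, (a +' M i k *' N k j). split; auto. split; auto.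
    exists (M i k *' N k j). split; auto. apply (HX k Hk). auto.
Qed.

(* The partial sums of [M_ik N_kj] are bounded by [k (sM sN)], since every entry is bounded by its
   code; so the sequence of partial sums can be β-coded. *)
Lemma psum_exists i j sM sN K : codes_terms i j sM sN K -> exists c d v, psum i j K c d v.
Proof.
  intros HX.
  set (b := sM *' sN).
  set (p := fun n : nat => match n with 0 => i | 1 => j | 2 => sM | 3 => sN | _ => b end).
  assert (Hterm : forall k, k <' K -> M i k *' N k j <=' b).
  { intros k Hk. destruct (proj2 (HX k Hk _) eq_refl) as [y [z [E [Hy Hz]]]].
    rewrite E. apply mul_le_mono; eapply coded_entry_le; eauto. }
  destruct (beta_code_rec step_rel psum_bound_rel p (K *' b) K) as [c [d [C1 C2]]].
  - exists o. simpl. rewrite mul_zero_l. split; [apply le_zero_l | apply le_refl].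
  - intros k a Hk Ha. simpl in *. exists (a +' M i k *' N k j).
    assert (Hv : a +' M i k *' N k j <=' sc k *' b).
    { replace (sc k *' b) with (k *' b +' b) by sring. apply add_le_mono; auto. }
    split; [|split; [|exact Hv]].
    + eapply le_trans; [exact Hv|]. apply mul_le_mono; [apply lt_iff_succ_le; auto | apply le_refl].
    + exists (M i k *' N k j). split; auto. apply (HX k Hk). auto.
  - destruct (C1 K (le_refl K)) as [v [Hv _]]. exists c, d, v. split; [|split; auto].
    + destruct (C1 o (le_zero_l K)) as [a [Ha Hia]]. simpl in Hia. rewrite mul_zero_l in Hia.
      rewrite (le_zero_eq a Hia) in Ha. exact Ha.
    + intros k a Hk Ha. destruct (C1 (sc k)) as [w [Hw _]]; [apply lt_iff_succ_le; auto|].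
      destruct (C2 k a w Hk Ha Hw) as [x [Ex Hx]]. simpl in Ex, Hx.
      apply (HX k Hk) in Hx. subst. auto.
Qed.

Lemma psum_zero i j K : (forall k, k <' K -> M i k = o) -> psum i j K o o o.
Proof.
  intros HM. assert (Hb : forall k, betaA B o o k o) by (intros k; apply mod_small, lt_zero_succ).
  split; auto. split; auto. intros k a Hk Ha.
  rewrite (beta_unique _ _ _ _ _ Ha (Hb k)), HM, mul_zero_l, add_zero_r; auto.
Qed.

Lemma psum_prefix_agree i j K1 c1 d1 v1 K2 c2 d2 v2 : K1 <=' K2 ->
  psum i j K1 c1 d1 v1 -> psum i j K2 c2 d2 v2 ->
  forall k, k <=' K1 -> forall a b, betaA B c1 d1 k a -> betaA B c2 d2 k b -> a = b.
Proof.
  intros HK [A0 [AS _]] [B0 [BS _]].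
  indf (fImp (fLe (tVar 0) (tVar 1)) (fBAll (tSucc (tVar 2)) (fBAll (tSucc (tVar 5))
     (fImp (fbeta (tVar 4) (tVar 5) (tVar 2) (tVar 1))
           (fImp (fbeta (tVar 6) (tVar 7) (tVar 2) (tVar 0)) (fEq (tVar 1) (tVar 0)))))))
     (scons B K1 (scons B c1 (scons B d1 (scons B c2 (scons B d2 env0))))).
  - sat_simpl. split.
    + intros H Hle x y Hx Hy. apply (H Hle); auto; apply lt_succ_r; eapply beta_le; eauto.
    + intros H Hle x _ y _ Hx Hy. eauto.
  - intros _ a b Ha Hb. rewrite (beta_unique _ _ _ _ _ Ha A0), (beta_unique _ _ _ _ _ Hb B0). auto.
  - intros k IH Hk a b Ha Hb.
    assert (Hk' : k <' K1) by (apply lt_iff_succ_le; auto).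
    destruct (beta_exists c1 d1 k) as [a0 Ha0]. destruct (beta_exists c2 d2 k) as [b0 Hb0].
    assert (E : a0 = b0) by (apply (IH (lt_le_incl _ _ Hk')); auto). subst b0.
    rewrite (beta_unique _ _ _ _ _ Ha (AS k a0 Hk' Ha0)).
    rewrite (beta_unique _ _ _ _ _ Hb (BS k a0 (lt_le_trans _ _ _ Hk' HK) Hb0)). auto.
Qed.

Lemma psum_unique_le i j K1 c1 d1 v1 K2 c2 d2 v2 : K1 <=' K2 ->
  psum i j K1 c1 d1 v1 -> psum i j K2 c2 d2 v2 -> vanishes_from i j K1 -> v1 = v2.
Proof.
  intros HK H1 H2 Htail.
  assert (Hagree := psum_prefix_agree i j K1 c1 d1 v1 K2 c2 d2 v2 HK H1 H2).
  destruct H1 as [_ [_ AK]], H2 as [_ [BS BK]].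
  assert (HB : forall k, K1 <=' k -> k <=' K2 -> forall b, betaA B c2 d2 k b -> b = v1).
  { indf (fImp (fLe (tVar 1) (tVar 0)) (fImp (fLe (tVar 0) (tVar 2)) (fBAll (tSucc (tVar 3))
       (fImp (fbeta (tVar 4) (tVar 5) (tVar 1) (tVar 0)) (fEq (tVar 0) (tVar 6))))))
       (scons B K1 (scons B K2 (scons B c2 (scons B d2 (scons B v1 env0))))).
    - sat_simpl. split.
      + intros H H1 H2 y Hy. apply (H H1 H2); auto. apply lt_succ_r; eapply beta_le; eauto.
      + intros H H1 H2 y _ Hy. eauto.
    - intros H1 H2 b Hb. apply le_zero_eq in H1. subst K1.
      symmetry. apply (Hagree o (le_refl _)); auto.
    - intros k IH H1 H2 b Hb. apply le_lteq in H1. destruct H1 as [H1| ->].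
      + apply lt_succ_r in H1. destruct (beta_exists c2 d2 k) as [b0 Hb0].
        assert (Hk2 : k <' K2) by (apply lt_iff_succ_le; auto).
        assert (E : b0 = v1) by (apply (IH H1); auto; apply lt_le_incl; auto).
        rewrite (beta_unique _ _ _ _ _ Hb (BS k b0 Hk2 Hb0)).
        rewrite Htail; [rewrite add_zero_r; auto|]. apply le_not_lt; auto.
      + symmetry. apply (Hagree (sc k) (le_refl _)); auto. }
  symmetry. apply (HB K2); auto. apply le_refl.
Qed.

Lemma psum_unique i j K1 c1 d1 v1 K2 c2 d2 v2 :
  psum i j K1 c1 d1 v1 -> psum i j K2 c2 d2 v2 ->
  vanishes_from i j K1 -> vanishes_from i j K2 -> v1 = v2.
Proof.
  intros H1 H2 T1 T2. destruct (le_total K1 K2) as [H|H].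
  - eapply psum_unique_le; eauto.
  - symmetry. eapply psum_unique_le; eauto.
Qed.

Lemma product_entry_exists : good B M -> good B N -> forall i j, exists v, prod_entry B M N i j v.
Proof.
  intros HM HN i j.
  destruct (HN (sc j)) as [K [N_support [sN HsN]]].
  destruct (HM K) as [I [M_support [sM HsM]]].
  assert (Htail : vanishes_from i j K).
  { intros k Hk. destruct (classic (N k j = o)) as [E|E]; [rewrite E; apply mul_zero_r|].
    exfalso. apply Hk, (N_support k j); auto. apply lt_succ_diag_r. }
  destruct (classic (i <' I)) as [Hi|Hi].
  - destruct (psum_exists i j sM sN K) as [c [d [v Hp]]].
    { apply (codes_terms_of_blocks I K (sc j)); auto. apply lt_succ_diag_r. }
    exists v, K. split; [exact Htail | exists c, d; exact Hp].
  - exists o, K. split; [exact Htail | exists o, o; apply psum_zero].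
    intros k Hk. destruct (classic (M i k = o)) as [E|E]; auto.
    exfalso. apply Hi. eapply M_support; eauto.
Qed.

Section Block.

Variables J K I sM sN : B.
Hypothesis N_support : forall k j, j <' J -> N k j <> o -> k <' K.
Hypothesis sN_codes : codes_block N K J sN.
Hypothesis M_support : forall i k, k <' K -> M i k <> o -> i <' I.
Hypothesis sM_codes : codes_block M I K sM.
Variable P : B -> B -> B.
Hypothesis P_entries : forall i j, prod_entry B M N i j (P i j).

Lemma vanishes_on_block i j : j <' J -> vanishes_from i j K.
Proof.
  intros Hj k Hk. destruct (classic (N k j = o)) as [E|E]; [rewrite E; apply mul_zero_r|].
  exfalso. apply Hk, (N_support k j); auto.
Qed.

Lemma product_vanishes i j : j <' J -> ~ i <' I -> P i j = o.
Proof.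
  intros Hj Hi. destruct (P_entries i j) as [K' [T [c [d Hp]]]].
  symmetry. apply (psum_unique i j K o o o K' c d); auto.
  - apply psum_zero. intros k Hk. destruct (classic (M i k = o)) as [E|E]; auto.
    exfalso. apply Hi. eapply M_support; eauto.
  - apply vanishes_on_block; auto.
Qed.

Lemma coded_psum_product i j c d v : i <' I -> j <' J ->
  coded_psum i j sM sN K c d v -> v = P i j.
Proof.
  intros Hi Hj Hps. apply coded_psum_iff in Hps; [|apply (codes_terms_of_blocks I K J); auto].
  destruct (P_entries i j) as [K' [T [c' [d' Hp]]]].
  eapply psum_unique; eauto. apply vanishes_on_block; auto.
Qed.

Lemma coded_psum_product_exists i j : i <' I -> j <' J ->
  exists c d, coded_psum i j sM sN K c d (P i j).
Proof.
  intros Hi Hj. assert (HX : codes_terms i j sM sN K) by (apply (codes_terms_of_blocks I K J); auto).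
  destruct (psum_exists i j sM sN K HX) as [c [d [v Hp]]].
  apply (coded_psum_iff _ _ _ _ _ c d v HX) in Hp as Hps.
  rewrite (coded_psum_product i j c d v Hi Hj Hps) in Hps. eauto.
Qed.

Let params (W : B) (n : nat) : B :=
  match n with 0 => J | 1 => K | 2 => sM | 3 => sN | _ => W end.

Lemma coded_psum_entries_bounded : exists W, forall k, k <' I *' J ->
  exists t, t <=' W /\ coded_psum_entry W J K sM sN k t.
Proof.
  destruct (delta0_collection entry_bound_rel (params o) (I *' J)) as [W HW].
  - intros k Hk. simpl.
    assert (HJ : J <> o) by (intros E; rewrite E, mul_zero_r in Hk; eapply not_lt_zero; eauto).
    destruct (div_mod_exists J HJ k) as [i [j [Ek Hj]]].
    assert (Hi : i <' I) by (apply (lt_mul_add_mul_inv I J i j); rewrite <- Ek; auto).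
    destruct (coded_psum_product_exists i j Hi Hj) as [c [d Hps]].
    destruct (triple_exists i j (P i j)) as [t Ht].
    set (S := i +' j +' c +' d +' P i j +' t).
    exists (sc S), t. split; [apply lt_succ_r; exists (i +' j +' c +' d +' P i j); unfold S; ring|].
    exists i, j, c, d, (P i j).
    split; [apply lt_succ_r; exists (j +' c +' d +' P i j +' t); unfold S; ring|].
    split; [apply lt_succ_r; exists (i +' c +' d +' P i j +' t); unfold S; ring|].
    split; [apply lt_succ_r; exists (i +' j +' d +' P i j +' t); unfold S; ring|].
    split; [apply lt_succ_r; exists (i +' j +' c +' P i j +' t); unfold S; ring|].
    split; [apply lt_succ_r; exists (i +' j +' c +' d +' t); unfold S; ring|].
    auto.
  - exists W. intros k Hk. destruct (HW k Hk) as [w [Hw [t [Ht Hpsi]]]]. exists t. split.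
    + apply lt_le_incl. eapply lt_trans; eauto.
    + eapply coded_psum_entry_mono; eauto. apply lt_le_incl; auto.
Qed.

Lemma product_block_coded : exists s, codes_block P I J s.
Proof.
  destruct coded_psum_entries_bounded as [W HW].
  destruct (beta_code_choice entry_rel (params W) W (I *' J)) as [c [d Hc]]; [exact HW|].
  destruct (pair_exists c d) as [pc Hpc]. destruct (pair_exists (I *' J) pc) as [s Hs].
  exists s. intros t. split.
  - intros [n' [c' [d' [p' [H1 [H2 [k [Hk Hb]]]]]]]].
    destruct (pair_inj _ _ _ _ _ H2 Hs) as [-> ->].
    destruct (pair_inj _ _ _ _ _ H1 Hpc) as [-> ->].
    destruct (Hc k Hk) as [a [Ha Hia]]. simpl in Hia.
    rewrite (beta_unique _ _ _ _ _ Ha Hb) in Hia.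
    destruct Hia as [i [j [c'' [d'' [v [_ [_ [_ [_ [_ [Ek [Hj [Hps Ht]]]]]]]]]]]]].
    assert (Hi : i <' I) by (apply (lt_mul_add_mul_inv I J i j); rewrite <- Ek; auto).
    exists i, j, v. split; auto. split; auto. split; auto.
    eapply coded_psum_product; eauto.
  - intros [i [j [v [Ht [Hi [Hj ->]]]]]].
    assert (Hk : i *' J +' j <' I *' J) by (apply lt_mul_add_mul; auto).
    destruct (Hc _ Hk) as [a [Ha Hia]]. simpl in Hia.
    destruct Hia as [i' [j' [c'' [d'' [v [_ [_ [_ [_ [_ [Ek [Hj' [Hps Ht']]]]]]]]]]]]].
    destruct (div_mod_unique J i j i' j' Ek Hj Hj') as [<- <-].
    rewrite (coded_psum_product i j c'' d'' v Hi Hj Hps) in Ht'.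
    rewrite (triple_unique _ _ _ _ _ Ht' Ht) in Ha.
    exists (I *' J), c, d, pc. split; auto. split; auto. exists (i *' J +' j). auto.
Qed.

End Block.

Lemma good_product (P : B -> B -> B) : good B M -> good B N ->
  (forall i j, prod_entry B M N i j (P i j)) -> good B P.
Proof.
  intros HM HN HP J.
  destruct (HN J) as [K [N_support [sN HsN]]]. destruct (HM K) as [I [M_support [sM HsM]]].
  exists I. split.
  - intros i j Hj HPij. destruct (classic (i <' I)) as [Hi|Hi]; auto.
    exfalso. apply HPij. eapply product_vanishes; eauto.
  - apply (product_block_coded J K I sM sN); auto.
Qed.

End Product.

End ISigma1.

Theorem lemma2p3 (B : arith_structure) (HB : models_ISigma1 B)
  (M N : B -> B -> B) (HM : good B M) (HN : good B N) :
  exists P : B -> B -> B,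
    (forall i j, prod_entry B M N i j (P i j)) /\ good B P.
Proof.
  destruct HB as [HQ HI].
  destruct (choice (fun ij v => prod_entry B M N (fst ij) (snd ij) v)) as [f Hf].
  { intros [i j]. apply (product_entry_exists B HQ HI M N HM HN). }
  exists (fun i j => f (i, j)).
  assert (HP : forall i j, prod_entry B M N i j (f (i, j))) by (intros i j; apply (Hf (i, j))).
  split; [exact HP|].
  apply (good_product B HQ HI M N); auto.
Qed.
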